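(* Let $q$ be a prime power and $b,k,t$ positive integers. For the $b$-symbol weight function $wt_b$ on $\mathbb{F}_q^k$, $r_b^{wt_b}(k,t)\ge 2t-b+1$.
   Context: For $\boldsymbol{z}=(z_0,\ldots,z_{n-1}),\boldsymbol{w}\in\mathbb{F}_q^n$, $d_b(\boldsymbol{z},\boldsymbol{w})$ is the number of $i\in\{0,\ldots,n-1\}$ with $(z_i,\ldots,z_{i+b-1})\ne(w_i,\ldots,w_{i+b-1})$ (indices mod $n$), and $wt_b(\boldsymbol{x})=d_b(\boldsymbol{x},\boldsymbol{0})$. A systematic encoding $\mathrm{Enc}(\boldsymbol{x})=(\boldsymbol{x},p(\boldsymbol{x}))\in\mathbb{F}_q^{k+r}$ is a function-correcting $b$-symbol code for $f$ if $d_b(\mathrm{Enc}(\boldsymbol{x}_1),\mathrm{Enc}(\boldsymbol{x}_2))\ge 2t+1$ whenever $f(\boldsymbol{x}_1)\ne f(\boldsymbol{x}_2)$; $r_b^f(k,t)$ is the smallest $r$ for which one exists. The paper's standing assumptions are $2<b<k$ and $t>\lfloor\frac{b-1}{2}\rfloor$. *)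

From HB Require Import structures.
From mathcomp Require Import all_boot all_order all_algebra all_field.
Set Implicit Arguments. Unset Strict Implicit. Unset Printing Implicit Defensive.
Import GRing.Theory.
Local Open Scope ring_scope.

Definition bsym_dist (F : fieldType) (b : nat) (z w : seq F) : nat :=
  let n := size z in
  count (fun i : nat =>
           has (fun j : nat => nth 0 z ((i + j) %% n) != nth 0 w ((i + j) %% n))
               (iota 0 b))
        (iota 0 n).

Definition bsym_wt (F : fieldType) (b : nat) (x : seq F) : nat :=
  bsym_dist b x (nseq (size x) 0).

Definition sys_enc (F : fieldType) (k r : nat) (p : k.-tuple F -> r.-tuple F)
  (x : k.-tuple F) : seq F := (tval x ++ tval (p x))%SEQ.

Definition is_FCbSC (F : fieldType) (T : eqType) (b t k r : nat)
  (f : k.-tuple F -> T) (p : k.-tuple F -> r.-tuple F) : Prop :=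
  forall x1 x2 : k.-tuple F, f x1 != f x2 ->
    (2 * t + 1 <= bsym_dist b (sys_enc p x1) (sys_enc p x2))%N.

From mathcomp Require Import all_boot all_order all_algebra all_field.
From mathcomp Require Import zify.

Set Implicit Arguments.
Unset Strict Implicit.
Unset Printing Implicit Defensive.

Import GRing.Theory.
Local Open Scope ring_scope.

(* The words 0 and e_0 = (1, 0, ..., 0) have different b-symbol weights, yet
   they agree on the k - 1 positions 1, ..., k - 1, so the k - b windows lying
   inside that stretch coincide for any choice of parities.  Hence the
   encodings are at b-symbol distance at most (k + r) - (k - b) = r + b, and
   correcting t errors forces 2t + 1 <= r + b. *)

Section BSymbolDistance.

Variables (F : fieldType) (b : nat).

Lemma bsym_dist_eq0 (z w : seq F) :
  (0 < b)%N -> size w = size z -> (bsym_dist b z w == 0)%N = (z == w).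
Proof.
move=> b_gt0 size_wz; apply/idP/eqP => [|->]; last first.
  by rewrite /bsym_dist -leqn0 leqNgt -has_count; apply/hasPn => i _;
    apply/hasPn => j _; rewrite eqxx.
rewrite /bsym_dist -leqn0 leqNgt -has_count => /hasPn no_diff.
apply: (eq_from_nth (x0 := 0)) => [|i lt_iz]; first by rewrite size_wz.
have := no_diff i; rewrite mem_iota lt_iz => /(_ isT)/hasPn/(_ 0%N).
by rewrite mem_iota b_gt0 addn0 modn_small // negbK => /(_ isT)/eqP.
Qed.

Lemma bsym_wt_eq0 (x : seq F) :
  (0 < b)%N -> (bsym_wt b x == 0)%N = (x == nseq (size x) 0).
Proof. by move=> b_gt0; rewrite /bsym_wt bsym_dist_eq0 // size_nseq. Qed.

(* The windows starting in [m, m + L - b] do not wrap around, as m + L <= n. *)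
Lemma bsym_dist_agree_interval (z w : seq F) (m L : nat) :
  (0 < b)%N -> (m + L <= size z)%N ->
  (forall i, (m <= i < m + L)%N -> nth 0 z i = nth 0 w i) ->
  (bsym_dist b z w + (L.+1 - b) <= size z)%N.
Proof.
move=> b_gt0 le_mLz agree; rewrite /bsym_dist.
set n := size z; set d := (L.+1 - b)%N.
set P := fun i => has _ _.
have -> : n = (m + (d + (n - (m + d))))%N by rewrite /d /n; lia.
rewrite !iotaD !count_cat.
have -> : count P (iota (0 + m) d) = 0%N.
  apply/eqP; rewrite -leqn0 leqNgt -has_count; apply/hasPn => i.
  rewrite mem_iota => /andP[le_mi lt_i]; apply/hasPn => j.
  rewrite mem_iota => /andP[_ lt_jb].
  by rewrite modn_small ?agree ?eqxx //; rewrite /d /n in lt_i *; lia.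
have := count_size P (iota 0 m).
have := count_size P (iota (0 + m + d) (n - (m + d))).
rewrite !size_iota; lia.
Qed.

End BSymbolDistance.

Theorem mainTheorem19 (F : finFieldType) (b k t r : nat)
  (p : k.-tuple F -> r.-tuple F) :
  (2 < b)%N -> (b < k)%N -> ((b - 1)./2 < t)%N ->
  is_FCbSC b t (fun x : k.-tuple F => bsym_wt b (tval x)) p ->
  (2 * t + 1 - b <= r)%N.
Proof.
case: k p => [|k] p lt2b ltbk _ fc; first by [].
have b_gt0 : (0 < b)%N by lia.
pose e (c : F) : k.+1.-tuple F := cons_tuple c (nseq_tuple k 0).
have wt_e0 : bsym_wt b (e 0) = 0%N by apply/eqP; rewrite bsym_wt_eq0 ?size_tuple.
have wt_e1 : bsym_wt b (e 1) != 0%N.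
  by rewrite bsym_wt_eq0 // size_tuple eqseq_cons oner_eq0.
have /fc dist_lb : bsym_wt b (e 0) != bsym_wt b (e 1) by rewrite wt_e0 eq_sym.
have agree i : (1 <= i < 1 + k)%N ->
    nth 0 (sys_enc p (e 0)) i = nth 0 (sys_enc p (e 1)) i.
  move=> /andP[i_gt0 lt_ik]; rewrite !nth_cat !size_tuple lt_ik.
  by case: i i_gt0 {lt_ik} => //= i _; rewrite nth_nseq.
have := bsym_dist_agree_interval b_gt0 _ agree.
rewrite /sys_enc size_cat !size_tuple in dist_lb * => /(_ (leq_addr r k.+1)).
lia.
Qed.
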